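(* Let $G$ be a graph and $u$ a vertex of $G$ satisfying the NC property in $G$. Let $G'$ be the graph obtained from $G$ by locally chordalizing all holes in $\mathcal H(G,u)$ by $u$. Then every hole of $G'$ is a hole of $G$ (no new hole is created).
   Context: All graphs are finite and simple. A hole of $G$ is an induced cycle of length at least $4$. $\mathcal H(G)$ is the set of holes of $G$ and $\mathcal H(G,u)$ the set of holes containing $u$. A vertex $u$ satisfies the NC property in $G$ if there are no holes $H\in\mathcal H(G,u)$ and $H'\in\mathcal H(G)\setminus\mathcal H(G,u)$ sharing two consecutive edges, i.e. two distinct edges with a common end vertex that both lie on $H$ and on $H'$. Locally chordalizing all holes in $\mathcal H(G,u)$ by $u$ produces the graph $G'$ with $V(G')=V(G)$ and $E(G')=E(G)\cup\{uw: w\neq u,\ w\in V(H)\text{ for some }H\in\mathcal H(G,u)\}$. *)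

From mathcomp Require Import all_boot.
Set Implicit Arguments. Unset Strict Implicit. Unset Printing Implicit Defensive.

(* A hole is an induced cycle of length >= 4, given by the cyclic sequence s
   of its (distinct) vertices: two vertices of s are adjacent in the graph
   iff they are consecutive on the cycle. *)
Definition hole (T : eqType) (E : T -> T -> Prop) (s : seq T) : Prop :=
  [/\ uniq s, 4 <= size s &
      forall x y, x \in s -> y \in s -> (E x y <-> (y = next s x \/ x = next s y))].

(* xy is an edge of the hole s (holes are induced subgraphs). *)
Definition hole_edge (T : eqType) (E : T -> T -> Prop) (s : seq T) (x y : T) :=
  [/\ x \in s, y \in s & E x y].

Definition NC (T : eqType) (E : T -> T -> Prop) (u : T) : Prop :=
  ~ exists (H H' : seq T) (x y z : T),
      [/\ hole E H, u \in H, hole E H', u \notin H' &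
        [/\ x <> z, hole_edge E H x y, hole_edge E H y z,
            hole_edge E H' x y & hole_edge E H' y z]].

(* Locally chordalizing all holes of H(G,u) by u: add edges uw for every
   w <> u lying on some hole containing u. *)
Definition locchord (T : eqType) (E : T -> T -> Prop) (u : T) (x y : T) : Prop :=
  E x y \/
  (x <> y /\
   ((x = u /\ exists H, [/\ hole E H, u \in H & y \in H]) \/
    (y = u /\ exists H, [/\ hole E H, u \in H & x \in H]))).

From Stdlib Require Import Classical.
From mathcomp Require Import all_boot zify.
Set Implicit Arguments. Unset Strict Implicit. Unset Printing Implicit Defensive.

(* Holes of G' avoiding u are holes of G, so the point is that no new edge
   uy lies on a hole C of G'.  If it did, C - u would be an induced path P of
   G from y whose inner vertices see u neither in G nor through a hole, and
   whose two ends do.  The end y lies inside a hole H through u, and NC says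
   that the two H-neighbours of y cannot be joined around y; hence P and its
   far side touch only one side of y on H.  Going from u along the untouched
   side of H to y, along P, and likewise back to u at the far end of P,
   encloses a hole through u containing an inner vertex of P, which is
   absurd. *)

Lemma last_index (Q : nat -> Prop) m :
  0 < m -> Q 0 -> exists l, [/\ l < m, Q l & forall k, l < k < m -> ~ Q k].
Proof.
elim: m => [//|[|m] IH] _ Q0; first by exists 0; split => // k Hk; exfalso; lia.
case: (classic (Q m.+1)) => [Qm | NQm].
  by exists m.+1; split => // k Hk; exfalso; lia.
have [l [Hl Ql Hlast]] := IH isT Q0; exists l; split => // [|k Hk]; first lia.
by case: (ltnP k m.+1) => Hkm; [apply: Hlast; lia | have -> : k = m.+1 by lia].
Qed.

Section InducedPaths.
Variables (T : Type) (E : T -> T -> Prop).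
Hypothesis Esym : forall x y, E x y -> E y x.
Hypothesis Eirr : forall x, ~ E x x.

Definition induced_path (m : nat) (g : nat -> T) :=
  forall k l, k < m -> l < m ->
    (g k = g l -> k = l) /\ (E (g k) (g l) <-> l = k.+1 \/ k = l.+1).

Lemma induced_path_inj m g k l :
  induced_path m g -> k < m -> l < m -> g k = g l -> k = l.
Proof. by move=> Pg Hk Hl; case: (Pg k l Hk Hl). Qed.

Lemma induced_path_adj m g k l :
  induced_path m g -> k < m -> l < m -> E (g k) (g l) <-> l = k.+1 \/ k = l.+1.
Proof. by move=> Pg Hk Hl; case: (Pg k l Hk Hl). Qed.

Lemma induced_path_step m g k : induced_path m g -> k.+1 < m -> E (g k) (g k.+1).
Proof. by move=> Pg Hk; apply/(induced_path_adj Pg); [lia | lia | left]. Qed.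

Lemma induced_path_rev m g :
  induced_path m g -> induced_path m (fun k => g (m.-1 - k)).
Proof.
move=> Pg k l Hk Hl; have [inj adj] := Pg (m.-1 - k) (m.-1 - l) ltac:(lia) ltac:(lia).
by split; [move/inj; lia | rewrite adj; lia].
Qed.

Lemma induced_path_drop m g l :
  induced_path m g -> induced_path (m - l) (fun k => g (l + k)).
Proof.
move=> Pg k k' Hk Hk'; have [inj adj] := Pg (l + k) (l + k') ltac:(lia) ltac:(lia).
by split; [move/inj; lia | rewrite adj; lia].
Qed.

Lemma induced_path_cons m g x :
  induced_path m g -> (forall k, k < m -> x <> g k) ->
  (forall k, k < m -> E x (g k) <-> k = 0) ->
  induced_path m.+1 (fun k => if k is k'.+1 then g k' else x).
Proof.
move=> Pg Hx Ex [|k] [|l] /= Hk Hl.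
- by split => //; split => [/Eirr [] | []].
- by split => [/Hx [] | ]; [lia | rewrite Ex; lia].
- by split => [/esym /Hx [] | ]; [lia | split => [/Esym /Ex | E0]; [lia | apply/Esym/Ex; lia]].
- have [inj adj] := Pg k l Hk Hl.
  by split; [move/inj -> | rewrite adj; lia].
Qed.

Inductive conn_in (P : T -> Prop) : T -> T -> Prop :=
  | conn_in_refl x : P x -> conn_in P x x
  | conn_in_step x y z : P x -> E x y -> conn_in P y z -> conn_in P x z.

Lemma conn_in_ends P x y : conn_in P x y -> P x /\ P y.
Proof. by elim=> [z Pz | a b c Pa _ _ [_ Pc]]. Qed.

Lemma conn_in_trans P x y z : conn_in P x y -> conn_in P y z -> conn_in P x z.
Proof. by elim=> // a b c Pa Eab _ IH /IH; apply: conn_in_step. Qed.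

Lemma conn_in_sym P x y : conn_in P x y -> conn_in P y x.
Proof.
elim=> [a Pa | a b c Pa Eab Cbc IH]; first exact: conn_in_refl.
apply: conn_in_trans IH (conn_in_step _ (Esym Eab) (conn_in_refl Pa)).
by case: (conn_in_ends Cbc).
Qed.

Lemma conn_in_sub (P Q : T -> Prop) x y :
  (forall z, P z -> Q z) -> conn_in P x y -> conn_in Q x y.
Proof.
move=> PQ; elim=> [a Pa | a b c Pa Eab _ IH]; first exact/conn_in_refl/PQ.
exact: conn_in_step (PQ _ Pa) Eab IH.
Qed.

Lemma conn_in_segment P (f : nat -> T) lo hi :
  lo <= hi -> (forall k, lo <= k < hi -> E (f k) (f k.+1)) ->
  (forall k, lo <= k <= hi -> P (f k)) -> conn_in P (f lo) (f hi).
Proof.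
move=> Hlh; have [d -> {Hlh}] : exists d, hi = lo + d by exists (hi - lo); lia.
elim: d lo => [|d IH] lo HE HP; first by rewrite addn0; apply/conn_in_refl/HP; lia.
apply: (conn_in_step (y := f lo.+1)); [apply: HP | apply: HE | ]; try lia.
by rewrite -addSnnS; apply: IH => k Hk; [apply: HE | apply: HP]; lia.
Qed.

(* Prepend [x] to the induced path and cut it at its last vertex equal or
   adjacent to [x]. *)
Lemma induced_path_of_conn_in P x y :
  conn_in P x y ->
  exists m g, [/\ 0 < m, induced_path m g, g 0 = x, g m.-1 = y
                & forall k, k < m -> P (g k)].
Proof.
elim=> [{}x Px | {}x z {}y Px Exz _ [m [g [Hm Pg g0 gl gP]]]].
  exists 1, (fun=> x); split => // [[|k] [|l]] //= _ _.
  by split => //; split => [/Eirr [] | []].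
have Q0 : x = g 0 \/ E x (g 0) by right; rewrite g0.
have [l [Hl Ql Hlast]] := @last_index (fun k => x = g k \/ E x (g k)) m Hm Q0.
case: (classic (x = g l)) => [xgl | xNgl].
  exists (m - l), (fun k => g (l + k)); split; try lia.
  - exact: induced_path_drop.
  - by rewrite addn0.
  - by rewrite -gl; congr g; lia.
  - by move=> k Hk; apply: gP; lia.
have Pg' := induced_path_drop (l := l) Pg.
exists (m - l).+1, (fun k => if k is k'.+1 then g (l + k') else x); split => //.
- apply: induced_path_cons => // [k Hk xk | k Hk].
    case: (posnP k) => [k0 | kpos]; first by apply: xNgl; rewrite xk k0 addn0.
    by apply: (Hlast (l + k)); [lia | left].
  split => [Exk | ->]; last by rewrite addn0; case: Ql.
  by case: (posnP k) => // kpos; case: (Hlast (l + k)); [lia | right].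
- rewrite -gl; have -> : (m - l).+1.-1 = (m.-1 - l).+1 by lia.
  by congr g; lia.
- by case=> [|k] Hk //=; apply: gP; lia.
Qed.

End InducedPaths.

Lemma mem_mkseqP (T : eqType) (h : nat -> T) m x :
  reflect (exists2 k, k < m & x = h k) (x \in mkseq h m).
Proof.
by apply: (iffP mapP) => [] [k Hk ->]; exists k; rewrite // mem_iota in Hk *.
Qed.

Lemma mkseq_f (T : eqType) (h : nat -> T) m k : k < m -> h k \in mkseq h m.
Proof. by move=> Hk; apply/mem_mkseqP; exists k. Qed.

Section HolesThrough.
Variables (T : eqType) (E : T -> T -> Prop).
Hypothesis Esym : forall x y, E x y -> E y x.
Hypothesis Eirr : forall x, ~ E x x.

(* The hole [u :: mkseq h m], read off as the induced path [h] of [G - u]. *)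
Definition hole_through (u : T) (m : nat) (h : nat -> T) :=
  [/\ induced_path E m h, 3 <= m, forall k, k < m -> h k <> u
    & forall k, k < m -> E u (h k) <-> k = 0 \/ k = m.-1].

Lemma hole_through_eq u m h h' :
  (forall k, k < m -> h k = h' k) -> hole_through u m h -> hole_through u m h'.
Proof.
move=> hh' [Ph Hm hu Ehu]; split => // [k l Hk Hl | k Hk | k Hk].
- by rewrite -(hh' k) -?(hh' l) //; apply: Ph.
- by rewrite -hh' //; apply: hu.
- by rewrite -hh' //; apply: Ehu.
Qed.

Lemma hole_through_rev u m h :
  hole_through u m h -> hole_through u m (fun k => h (m.-1 - k)).
Proof.
case=> Ph Hm hu Ehu; split => [||k Hk|k Hk]; first exact: induced_path_rev.
- by [].
- by apply: hu; lia.
- by rewrite Ehu; lia.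
Qed.

Lemma hole_through_segment u m h P lo hi :
  hole_through u m h -> lo <= hi -> hi < m ->
  (forall k, lo <= k <= hi -> P (h k)) -> conn_in E P (h lo) (h hi).
Proof.
case=> Ph _ _ _ Hlh Hhi; apply: conn_in_segment => // k Hk.
by apply: (induced_path_step Ph); lia.
Qed.

Lemma hole_cons_hole_through u s :
  uniq (u :: s) -> 3 <= size s ->
  hole E (u :: s) <-> hole_through u (size s) (nth u s).
Proof.
move=> U Hs; have E_comm x y : E x y <-> E y x by split; apply: Esym.
have /andP [us Us] := U; set m := size s; set c := nth u s.
have cm : c m = u by rewrite /c nth_default.
have cu k : k < m -> c k <> u by move=> Hk ck; rewrite -ck mem_nth in us.
have c0 : c 0 <> u by apply: cu; lia.
have c_eq k l : k <= m -> l <= m -> c k = c l <-> k = l.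
  move=> Hk Hl; split => [|-> //].
  case: (ltngtP k m) (ltngtP l m) Hk Hl => [Hk|//|->] [Hl|//|->] _ _ //.
  - by move/eqP; rewrite nth_uniq // => /eqP.
  - by rewrite cm => /cu; case.
  - by rewrite cm => /esym /cu; case.
have c_in k : k < m -> c k \in u :: s by move=> Hk; rewrite inE mem_nth ?orbT.
have next_u : next (u :: s) u = c 0 by rewrite next_nth mem_head /= eqxx.
have next_c k : k < m -> next (u :: s) (c k) = c k.+1.
  move=> Hk; rewrite next_nth c_in //=.
  by rewrite (negbTE (introN eqP (nesym (cu k Hk)))) index_uniq.
split.
- case=> _ _ adj; split => // [k l Hk Hl | k Hk].
  + by rewrite c_eq ?adj ?c_in ?next_c // ?c_eq; lia.
  + by rewrite adj ?mem_head ?c_in // next_u next_c // -cm !c_eq; lia.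
case=> Pc _ _ Eu; split => // x y.
rewrite !inE => /orP [/eqP -> | /(nthP u) [k Hk <-]] /orP [/eqP -> | /(nthP u) [l Hl <-]];
  rewrite -/c.
- by rewrite next_u; split => [/Eirr [] | [] /esym /c0].
- by rewrite Eu // next_u next_c // -cm !c_eq; lia.
- by rewrite E_comm Eu // next_u next_c // -cm !c_eq; lia.
- by rewrite (induced_path_adj Pc) // !next_c // !c_eq; lia.
Qed.

Lemma hole_of_hole_through u m h :
  hole_through u m h -> hole E (u :: mkseq h m).
Proof.
move=> Hh; have [Ph Hm hu _] := Hh.
have U : uniq (u :: mkseq h m).
  rewrite /= (introT (mkseq_uniqP h m)) ?andbT.
    by apply/negP => /mem_mkseqP [k Hk] /esym; apply: hu.
  by move=> k l; rewrite !inE => Hk Hl; apply: (induced_path_inj Ph).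
apply/hole_cons_hole_through => //; rewrite size_mkseq //.
by apply: hole_through_eq Hh => k Hk; rewrite nth_mkseq.
Qed.

Lemma hole_through_mem (u : T) m h k : k < m -> h k \in u :: mkseq h m.
Proof. by move=> Hk; rewrite inE mkseq_f ?orbT. Qed.

Lemma hole_through_of_hole u c :
  hole E c -> u \in c ->
  exists m h, hole_through u m h /\
    forall x, x \in c -> x = u \/ exists2 k, k < m & x = h k.
Proof.
move=> Hc uc; have [i s cs] := rot_to uc.
have [U Hs adj] : hole E (u :: s).
  rewrite -cs; case: Hc => Uc Sc Ac; split; rewrite ?rot_uniq ?size_rot //.
  by move=> x y; rewrite !mem_rot => xc yc; rewrite !next_rot //; apply: Ac.
exists (size s), (nth u s); split.
  by apply/hole_cons_hole_through => //=; lia.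
move=> x; rewrite -(mem_rot i) cs inE => /orP [/eqP -> | xs]; first by left.
by right; exists (index x s); rewrite ?index_mem ?nth_index.
Qed.

End HolesThrough.

Section NCProperty.
Variables (T : eqType) (E : T -> T -> Prop) (u : T).
Hypothesis Esym : forall x y, E x y -> E y x.
Hypothesis Eirr : forall x, ~ E x x.
Hypothesis Nc : NC E u.

Definition anticomplete (Z W : T -> Prop) :=
  forall x y, Z x -> W y -> x <> y /\ ~ E x y.

Definition off_nbhd (y x : T) := [/\ x <> u, x <> y & ~ E y x].

(* Closed through [h i], such a connection would yield a hole avoiding [u]
   that shares both edges at [h i] with the hole through [u]. *)
Lemma no_bypass m h i :
  hole_through E u m h -> 0 < i < m.-1 ->
  ~ conn_in E (fun x => [/\ x <> u, x <> h i & ~ E (h i) x \/ x = h i.-1 \/ x = h i.+1])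
      (h i.-1) (h i.+1).
Proof.
move=> Hh Hi /(induced_path_of_conn_in Esym Eirr) [m' [p [Hm' Pp p0 pl pZ]]].
have [Ph Hm hu Ehu] := Hh.
have hadj k l : k < m -> l < m -> E (h k) (h l) <-> l = k.+1 \/ k = l.+1.
  exact: (induced_path_adj Ph).
have hne : h i.-1 <> h i.+1 by move/(induced_path_inj Ph); lia.
have hnadj : ~ E (h i.-1) (h i.+1) by rewrite hadj; lia.
have Hm'3 : 3 <= m'.
  case: (ltnP m' 3) => // small; exfalso; case: (m' =P 1) => [m1 | m1].
    by apply: hne; rewrite -p0 -pl m1.
  apply: hnadj; rewrite -p0 -pl; have -> : m'.-1 = 1 by lia.
  by apply: (induced_path_step Pp); lia.
have Hp : hole_through E (h i) m' p.
  split => // [k Hk | k Hk]; first by case: (pZ k Hk).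
  split => [Ehp | [] ->].
  - case: (pZ k Hk) => _ _ [// | [pk | pk]]; [left | right].
      by apply: (induced_path_inj Pp) => //; rewrite pk p0.
    by apply: (induced_path_inj Pp) => //; [lia | rewrite pk pl].
  - by rewrite p0; apply/Esym/hadj; lia.
  - by rewrite pl; apply/hadj; lia.
have Ea : E (h i.-1) (h i) by apply/hadj; lia.
have Eb : E (h i) (h i.+1) by apply/hadj; lia.
apply: Nc; exists (u :: mkseq h m), (h i :: mkseq p m'), (h i.-1), (h i), (h i.+1).
split; rewrite ?mem_head //; try exact: hole_of_hole_through.
  rewrite inE negb_or; apply/andP; split; first by apply/eqP/nesym/hu; lia.
  by apply/negP => /mem_mkseqP [k Hk] /esym; case: (pZ k Hk).
split => //; split => //; rewrite ?mem_head ?hole_through_mem //; try lia.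
- by rewrite -p0 hole_through_mem.
- by rewrite -pl hole_through_mem //; lia.
Qed.

(* Otherwise the two sides of [h i] would be joined around [h i] through
   [x0], against [no_bypass]. *)
Lemma hole_through_one_side m h i (W : T -> Prop) x0 :
  hole_through E u m h -> 0 < i < m.-1 ->
  (forall x, W x -> conn_in E (off_nbhd (h i)) x0 x) ->
  anticomplete W (fun y => exists2 l, l < i & y = h l) \/
  anticomplete W (fun y => exists2 l, i < l < m & y = h l).
Proof.
move=> Hh Hi HW; have [Ph Hm hu Ehu] := Hh.
set A := fun l => exists2 x, W x & x = h l \/ E x (h l).
have side (L : nat -> Prop) :
    (forall l, ~ (L l /\ A l)) -> anticomplete W (fun y => exists2 l, L l & y = h l).
  by move=> NLA x y Wx [l Ll ->]; split => [xh | Exh]; apply: (NLA l);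
    split => //; exists x => //; [left | right].
case: (classic (exists l, l < i /\ A l)) => [[l1 [Hl1 [x1 W1 T1]]] | N1];
  last by left; apply: side => l [Hl Al]; apply: N1; exists l.
case: (classic (exists l, i < l < m /\ A l)) => [[l2 [Hl2 [x2 W2 T2]]] | N2];
  last by right; apply: side => l [Hl Al]; apply: N2; exists l.
exfalso; apply: (no_bypass Hh Hi).
set G := fun x => _.
have Gh k : k < m -> k <> i -> G (h k).
  move=> Hk Hki; split; first exact: hu.
    by move/(induced_path_inj Ph); lia.
  case: (k =P i.-1) => [-> | Hk1]; first by right; left.
  case: (k =P i.+1) => [-> | Hk2]; first by right; right.
  by left; move/(induced_path_adj Ph); lia.
have Goff x : off_nbhd (h i) x -> G x by case=> *; split => //; left.
have Gx x : W x -> G x by move=> Wx; case: (conn_in_ends (HW x Wx)) => _ /Goff.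
have C1 : conn_in E G (h i.-1) x1.
  apply: (conn_in_trans (y := h l1)).
    apply/(conn_in_sym Esym)/(hole_through_segment Hh); try lia.
    by move=> k Hk; apply: Gh; lia.
  case: T1 => [-> | E1]; first by apply/conn_in_refl/Gh; lia.
  by apply: (conn_in_step (y := x1)); [apply: Gh; lia | apply: Esym | apply/conn_in_refl/Gx].
have C2 : conn_in E G x2 (h i.+1).
  apply: (conn_in_trans (y := h l2)); last first.
    apply/(conn_in_sym Esym)/(hole_through_segment Hh); try lia.
    by move=> k Hk; apply: Gh; lia.
  case: T2 => [-> | E2]; first by apply/conn_in_refl/Gh; lia.
  by apply: (conn_in_step (y := h l2)); [apply: Gx | | apply/conn_in_refl/Gh; lia].
apply: conn_in_trans C1 (conn_in_trans _ C2).
apply: (conn_in_sub Goff); apply: (conn_in_trans (y := x0)).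
  exact/(conn_in_sym Esym)/HW.
exact: HW.
Qed.

Lemma hole_through_orient m h i (W : T -> Prop) x0 :
  hole_through E u m h -> 0 < i < m.-1 ->
  (forall x, W x -> conn_in E (off_nbhd (h i)) x0 x) ->
  exists h' i', [/\ hole_through E u m h', 0 < i' < m.-1, h' i' = h i
    & anticomplete W (fun y => exists2 l, l < i' & y = h' l)].
Proof.
move=> Hh Hi HW; case: (hole_through_one_side Hh Hi HW) => [A | A].
  by exists h, i.
exists (fun k => h (m.-1 - k)), (m.-1 - i); split; try lia.
- exact: hole_through_rev.
- by congr h; lia.
- by move=> x y Wx [l Hl ->]; apply: A => //; exists (m.-1 - l) => //; lia.
Qed.

Definition arm (Z : T -> Prop) (w : T) :=
  [/\ Z w, E u w, forall x, Z x -> conn_in E Z w x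
    & forall x, Z x -> x <> u /\ (E u x -> x = w)].

Lemma arm_of_hole_through m h i :
  hole_through E u m h -> i < m.-1 -> arm (fun x => exists2 k, k <= i & x = h k) (h 0).
Proof.
move=> Hh Hi; have [_ Hm hu Ehu] := Hh; split.
- by exists 0.
- by apply/Ehu; [lia | left].
- move=> _ [k Hk ->]; apply: (hole_through_segment Hh); try lia.
  by move=> l Hl; exists l => //; lia.
- move=> _ [k Hk ->]; split; first by apply: hu; lia.
  by rewrite Ehu; [case=> [-> //|]; lia | lia].
Qed.

(* The vertices that [u] sees after locally chordalizing. *)
Definition linked (y : T) := E u y \/ exists H, [/\ hole E H, u \in H & y \in H].

Lemma linked_arm y x0 (W : T -> Prop) :
  y <> u -> ~ E u y -> linked y -> (forall x, W x -> conn_in E (off_nbhd y) x0 x) ->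
  exists Z w, [/\ arm Z w, Z y & anticomplete W (fun z => Z z /\ z <> y)].
Proof.
move=> yu Nuy [// | [H [HH uH yH]]] HW.
have [m [h [Hh memH]]] := hole_through_of_hole Esym Eirr HH uH.
have [_ Hm hu Ehu] := Hh.
case: (memH y yH) => [// | [i Hi yi]].
have Hi' : 0 < i < m.-1.
  by case: (ltnP 0 i) (ltnP i m.-1) => [] ? [] ? //; case: Nuy; rewrite yi Ehu //; lia.
rewrite yi in HW; have [h' [i' [Hh' Hi'' hi' A]]] := hole_through_orient Hh Hi' HW.
exists (fun x => exists2 k, k <= i' & x = h' k), (h' 0); split.
- by apply: (arm_of_hole_through Hh'); lia.
- by exists i' => //; rewrite yi hi'.
- move=> x z Wx [[k Hk ->] hk]; apply: A => //; exists k => //.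
  by case: (ltngtP k i') Hk hk => // -> _; rewrite hi' -yi.
Qed.

Lemma arms_hole Za wa Zb wb (Q : T -> Prop) :
  arm Za wa -> arm Zb wb -> (forall x, Q x -> x <> u /\ ~ E u x) ->
  anticomplete Za Zb -> conn_in E (fun x => [\/ Za x, Q x | Zb x]) wa wb ->
  exists H x, [/\ hole E H, u \in H, x \in H & Q x].
Proof.
move=> [Za_a Ea _ HZa] [Zb_b Eb _ HZb] HQ AZ.
move=> /(induced_path_of_conn_in Esym Eirr) [m [p [Hm Pp p0 pl pP]]].
have [ab Nab] := AZ _ _ Za_a Zb_b.
have Hm3 : 3 <= m.
  case: (ltnP m 3) => // small; exfalso; case: (m =P 1) => [m1 | m1].
    by apply: ab; rewrite -p0 -pl m1.
  apply: Nab; rewrite -p0 -pl; have -> : m.-1 = 1 by lia.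
  by apply: (induced_path_step Pp); lia.
have pu k : k < m -> p k <> u.
  by move=> Hk; case: (pP k Hk) => [/HZa | /HQ | /HZb] [].
have Hp : hole_through E u m p.
  split => // k Hk; split => [Eup | [-> | ->]]; rewrite ?p0 ?pl //.
  case: (pP k Hk) => [/HZa [_ H] | /HQ [_ /(_ Eup) []] | /HZb [_ H]].
    by left; apply: (induced_path_inj Pp) => //; rewrite p0; apply: H.
  by right; apply: (induced_path_inj Pp) => //; [lia | rewrite pl; apply: H].
case: (classic (exists2 k, k < m & Q (p k))) => [[k Hk Qk] | NQ].
  exists (u :: mkseq p m), (p k); split; rewrite ?mem_head ?hole_through_mem //.
  exact: hole_of_hole_through.
exfalso; have Za0 : Za (p 0) by rewrite p0.
have [l [Hl Zal Hlast]] := @last_index (fun k => Za (p k)) m Hm Za0.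
have Hl1 : l.+1 < m.
  case: (ltnP l.+1 m) => // Hl'; have lm : l = m.-1 by lia.
  by rewrite lm pl in Zal; case: (AZ _ _ Zal Zb_b).
have Zb1 : Zb (p l.+1).
  case: (pP _ Hl1) => // [Za1 | Q1]; first by case: (Hlast l.+1) => //; lia.
  by case: NQ; exists l.+1.
by case: (AZ _ _ Zal Zb1) => _; apply; apply: (induced_path_step Pp).
Qed.

Section LinkedInducedPath.
Variables (m : nat) (g : nat -> T).
Hypotheses (Pg : induced_path E m g) (Hm : 3 <= m) (gu : forall k, k < m -> g k <> u).
Hypothesis g_unlinked : forall k, 0 < k < m.-1 -> ~ linked (g k).
Hypotheses (g0_linked : linked (g 0)) (gl_linked : linked (g m.-1)).

Let g_inj k l : k < m -> l < m -> g k = g l -> k = l.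
Proof. exact: (induced_path_inj Pg). Qed.

Let g_adj k l : k < m -> l < m -> E (g k) (g l) <-> l = k.+1 \/ k = l.+1.
Proof. exact: (induced_path_adj Pg). Qed.

Let g_segment P lo hi :
  lo <= hi < m -> (forall k, lo <= k <= hi -> P (g k)) -> conn_in E P (g lo) (g hi).
Proof.
move=> Hlh; apply: conn_in_segment; first lia.
by move=> k Hk; apply: (induced_path_step Pg); lia.
Qed.

Lemma linked_path_first_arm :
  ~ E u (g 0) ->
  exists Za wa, [/\ arm Za wa, Za (g 0) & anticomplete Za (eq^~ (g m.-1))].
Proof.
move=> Nu0; set W := fun x => exists2 l, 2 <= l < m & x = g l.
have HW x : W x -> conn_in E (off_nbhd (g 0)) (g m.-1) x.
  move=> [l Hl ->]; apply/(conn_in_sym Esym)/g_segment; first lia.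
  move=> k Hk; split; first by apply: gu; lia.
    by move/g_inj; lia.
  by move/g_adj; lia.
have [Za [wa [Ha Za0 A]]] := linked_arm (gu (ltac:(lia) : 0 < m)) Nu0 g0_linked HW.
exists Za, wa; split => // x _ Zx ->.
case: (x =P g 0) => [-> | x0]; first by split; [move/g_inj | move/g_adj]; lia.
have [bx Nbx] : g m.-1 <> x /\ ~ E (g m.-1) x by apply: A; [exists m.-1 => //; lia | ].
by split => [/esym | /Esym].
Qed.

Lemma linked_path_second_arm Za wa :
  arm Za wa -> Za (g 0) -> anticomplete Za (eq^~ (g m.-1)) ->
  exists Zb wb, [/\ arm Zb wb, Zb (g m.-1) & anticomplete Za Zb].
Proof.
move=> Ha Za0 AZ; case: (classic (E u (g m.-1))) => [Eub | Nub].
  exists (eq^~ (g m.-1)), (g m.-1); split => //; split => // [x -> | x ->].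
    exact: conn_in_refl.
  by split => //; apply: gu; lia.
have [_ _ Ca HZa] := Ha.
set W := fun x => Za x \/ exists2 l, 0 < l & l.+2 < m /\ x = g l.
have HW x : W x -> conn_in E (off_nbhd (g m.-1)) wa x.
  have Za_off z : Za z -> off_nbhd (g m.-1) z.
    move=> Zz; have [zb Nzb] := AZ z _ Zz erefl.
    by split => // [|/Esym //]; case: (HZa z Zz).
  case=> [Zx | [l Hl0 [Hl ->]]]; first exact: conn_in_sub Za_off (Ca x Zx).
  apply: (conn_in_trans (y := g 0)); first exact: conn_in_sub Za_off (Ca _ Za0).
  apply: g_segment; first lia.
  move=> k Hk; split; first by apply: gu; lia.
    by move/g_inj; lia.
  by move/g_adj; lia.
have [Zb [wb [Hb Zbb A]]] := linked_arm (gu (ltac:(lia) : m.-1 < m)) Nub gl_linked HW.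
exists Zb, wb; split => // x z Zx Zz.
case: (z =P g m.-1) => [-> | zb]; first exact: AZ.
by apply: A => //; left.
Qed.

Lemma linked_path_start_adj : E u (g 0).
Proof.
apply: NNPP => Nu0.
have [Za [wa [Ha Za0 AZ]]] := linked_path_first_arm Nu0.
have [Zb [wb [Hb Zbb AZb]]] := linked_path_second_arm Ha Za0 AZ.
set Q := fun x => exists2 l, 0 < l < m.-1 & x = g l.
have HQ x : Q x -> x <> u /\ ~ E u x.
  by move=> [l Hl ->]; split => [|Eu]; [apply: gu; lia | apply: (g_unlinked Hl); left].
have [_ _ Ca _] := Ha; have [_ _ Cb _] := Hb.
have C : conn_in E (fun x => [\/ Za x, Q x | Zb x]) wa wb.
  apply: (conn_in_trans (y := g 0)); first by apply: conn_in_sub (Ca _ Za0) => x /Or31.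
  apply: (conn_in_trans (y := g m.-1)); last first.
    by apply/(conn_in_sym Esym)/(conn_in_sub _ (Cb _ Zbb)) => x /Or33.
  apply: g_segment; first lia.
  move=> k Hk; case: (posnP k) => [-> | k0]; first exact: Or31.
  case: (ltnP k m.-1) => Hk'; first by apply: Or32; exists k => //; lia.
  by apply: Or33; have -> : k = m.-1 by lia.
have [H [x [HH uH xH [l Hl xl]]]] := arms_hole Ha Hb HQ AZb C.
by apply: (g_unlinked Hl); right; exists H; rewrite -xl.
Qed.

End LinkedInducedPath.

End NCProperty.

Section LocalChordalization.
Variables (T : eqType) (E : T -> T -> Prop) (u : T).
Hypothesis Esym : forall x y, E x y -> E y x.
Hypothesis Eirr : forall x, ~ E x x.

Lemma locchord_sym x y : locchord E u x y -> locchord E u y x.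
Proof.
case=> [/Esym | [/nesym yx [[xu Hy] | [yu Hx]]]]; first by left.
  by right; split => //; right.
by right; split => //; left.
Qed.

Lemma locchord_irr x : ~ locchord E u x x.
Proof. by case=> [/Eirr | []]. Qed.

Lemma locchord_off x y : x <> u -> y <> u -> locchord E u x y <-> E x y.
Proof. by move=> xu yu; split => [[// | [_ [[] | []]]] // | ]; left. Qed.

Lemma locchord_linked y : locchord E u u y <-> y <> u /\ linked E u y.
Proof.
split => [[Euy | [uy [[_ [H HH]] | [yu _]]]] | [yu [Euy | [H HH]]]].
- by split; [move=> yu; move: Euy; rewrite yu; apply: Eirr | left].
- by split; [exact: nesym | right; exists H].
- by case: uy.
- by left.
- by right; split; [exact: nesym | left; split => //; exists H].
Qed.

Hypothesis Nc : NC E u.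

Lemma locchord_hole_through_start m g :
  hole_through (locchord E u) u m g -> E u (g 0).
Proof.
case=> Pg Hm gu Eug.
have lc_linked k : k < m -> locchord E u u (g k) <-> linked E u (g k).
  by move=> Hk; rewrite locchord_linked; split => [[] // | ]; split => //; exact: gu.
apply: (linked_path_start_adj Esym Eirr Nc (m := m)) => // [k l Hk Hl | k Hk | | ].
- have [inj adj] := Pg k l Hk Hl; split => //.
  by rewrite -adj; symmetry; apply: locchord_off; exact: gu.
- by move=> /(lc_linked k ltac:(lia)) /(Eug k ltac:(lia)); lia.
- by apply/(lc_linked 0 ltac:(lia))/(Eug 0 ltac:(lia)); left.
- by apply/(lc_linked m.-1 ltac:(lia))/(Eug m.-1 ltac:(lia)); right.
Qed.

Lemma locchord_hole_adj s y :
  hole (locchord E u) s -> u \in s -> y \in s -> locchord E u u y -> E u y.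
Proof.
move=> Hs us ys Luy.
have [m [g [Hg mem]]] := hole_through_of_hole locchord_sym locchord_irr Hs us.
case: (mem y ys) => [yu | [k Hk yk]]; first by move: Luy; rewrite yu => /locchord_irr.
have [_ _ _ Eug] := Hg; move: Luy; rewrite yk Eug // => -[-> | ->].
  exact: locchord_hole_through_start Hg.
by have := locchord_hole_through_start (hole_through_rev Hg); rewrite subn0.
Qed.

End LocalChordalization.

Theorem theorem2p3 (T : finType) (E : T -> T -> Prop) (u : T) :
  (forall x y, E x y -> E y x) -> (forall x, ~ E x x) ->
  NC E u ->
  forall s : seq T, hole (locchord E u) s -> hole E s.
Proof.
move=> Esym Eirr Nc s Hs; have [Us Ss As] := Hs; split => // x y xs ys.
rewrite -As //; split => [Exy | Lxy]; first by left.
case: (x =P u) => [xu | xu].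
  by rewrite xu in xs Lxy *; apply: (locchord_hole_adj Esym Eirr Nc Hs).
case: (y =P u) => [yu | yu]; last by rewrite locchord_off in Lxy.
rewrite yu in ys Lxy *; apply/Esym/(locchord_hole_adj Esym Eirr Nc Hs) => //.
exact: locchord_sym.
Qed.
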